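(* Let $X$ be a set and $F,F'$ forests of planar binary trees with leaves decorated by $X$, with $F'=T_1\cdots T_k$, $k\ge1$. Then in $T(\mathrm{Mag}(X))$: $F*F'=\sum_{\sigma\in S_k}(-1)^{O(\sigma)+k}\,F\curvearrowleft\Psi_{F'}(\sigma)$, where $O(\sigma)$ is the number of orbits of $\sigma$ on $\{1,\dots,k\}$.
   Context: Trees/forests: $\mathrm{Mag}(X)$ is identified with the span of planar rooted binary trees with leaves decorated by $X$, magmatic product $T_1*T_2=T_1\vee T_2$ (graft $T_1,T_2$ as left and right subtrees of a new root); $T(\mathrm{Mag}(X))$ has basis the forests, product concatenation, trees primitive, and $*$ extended as the unique bilinear map with, for all $f,g,h$ and trees $y$: $\varepsilon(f*g)=\varepsilon(f)\varepsilon(g)$; $\Delta(f*g)=\Delta(f)*\Delta(g)$; $f*1=f$; $1*f=\varepsilon(f)1$; $f*(gy)=(f*g)*y-f*(g*y)$; $(fg)*h=(f*h^{(1)})(g*h^{(2)})$; $(f*g)*h=f*\big((g*h^{(1)})h^{(2)}\big)$. For forests $F=F_1\cdots F_p$, $S=S_1\cdots S_n$: $F\curvearrowleft S_1=\sum_iF_1\cdots(F_i\vee S_1)\cdots F_p$ and $F\curvearrowleft S=(F\curvearrowleft S_1\cdots S_{n-1})*S_n$. Labelled skeleton: for a word $w$ of distinct positive integers define a planar binary tree with internal nodes labelled by the letters of $w$ recursively: the empty word gives the single leaf $|$, and if $w=w'\,m\,w''$ with $m=\min(w)$, the tree is the one with root labelled $m$, left subtree that of $w'$ and right subtree that of $w''$.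 $\Psi_{F'}(\sigma)$: let $O_1,\dots,O_r$ be the orbits of $\sigma$ ordered by increasing minimum. For an orbit $O=\{o\}$ of size one, the associated tree is $T_o$. For an orbit $O$ of size $m\ge2$ with minimum $o$, let $c_1=o$, $c_{j+1}=\sigma(c_j)$, $\tau=c_2c_3\cdots c_m$, and take the labelled skeleton of $\tau$ (which has $m$ leaves); graft $T_o$ on its leftmost leaf and, for each internal node labelled $c$, graft $T_c$ on the leftmost leaf of the right subtree of that node. $\Psi_{F'}(\sigma)$ is the forest of the $r$ trees so obtained, in the order of $O_1,\dots,O_r$. *)

From Stdlib Require Import ClassicalEpsilon.
From mathcomp Require Import all_boot all_order all_algebra all_fingroup.
Set Implicit Arguments.
Unset Strict Implicit.
Unset Printing Implicit Defensive.
Import GRing.Theory.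
Local Open Scope ring_scope.

(* Planar rooted binary trees with leaves decorated by X.
   [Node l r] is the magmatic product l \vee r. *)
Inductive tree (X : Type) : Type :=
  | Leaf : X -> tree X
  | Node : tree X -> tree X -> tree X.
Arguments Leaf {X} _.
Arguments Node {X} _ _.

(* Forests: words of trees (basis of T(Mag(X))); the empty forest is 1. *)
Definition forest (X : Type) := seq (tree X).

Section Lin.
Variables (R : fieldType) (X : Type).

(* Elements of T(Mag(X)) (coefficients in R) as finite formal sums. *)
Definition lin := seq (R * forest X).

(* Classical decision of equality of forests (X is an arbitrary set). *)
Definition decP (P : Prop) : bool :=
  if excluded_middle_informative P then true else false.

Definition coef (v : lin) (G : forest X) : R :=
  \sum_(p <- v) (if decP (p.2 = G) then p.1 else 0).

Definition lin_eq (v w : lin) : Prop := forall G, coef v G = coef w G.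

Definition scale (c : R) (v : lin) : lin := [seq (c * p.1, p.2) | p <- v].
Definition lopp (v : lin) : lin := scale (-1) v.

Fixpoint graft1 (F : forest X) (S : tree X) : lin :=
  match F with
  | [::] => [::]
  | t :: F' => (1, Node t S :: F') :: [seq (p.1, t :: p.2) | p <- graft1 F' S]
  end.

Definition graft_lin (v : lin) (S : tree X) : lin :=
  flatten [seq scale p.1 (graft1 p.2 S) | p <- v].

(* The product * of T(Mag(X)) on basis forests f, g, computed by the
   defining relations: f * 1 = f and f * (g y) = (f * g) * y - f * (g * y)
   for a tree y, where for a tree y, (f_1 ... f_p) * y = sum_i f_1 ..
   (f_i \vee y) .. f_p (from (fg)*h = (f*h^(1))(g*h^(2)), Delta y =
   y(x)1 + 1(x)y, 1*y = eps(y) 1 = 0, and tree*tree = \vee).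
   [n] is fuel, equal to [size g]. *)
Fixpoint starn (n : nat) (f g : forest X) : lin :=
  match n with
  | 0 => [:: (1, f)]
  | n'.+1 =>
      match rev g with
      | [::] => [:: (1, f)]
      | y :: rg' =>
          let g' := rev rg' in
          graft_lin (starn n' f g') y ++
          lopp (flatten [seq scale p.1 (starn n' f p.2) | p <- graft1 g' y])
      end
  end.

Definition star (f g : forest X) : lin := starn (size g) f g.

Definition graft_forest (F S : forest X) : lin :=
  foldl graft_lin [:: (1, F)] S.

End Lin.

(* Labelled skeleton of a word w of distinct naturals, with tree [lf]
   grafted on its leftmost leaf and, for each internal node labelled c,
   the tree [T c] grafted on the leftmost leaf of its right subtree.
   Fuel [n] (>= size w). *)
Fixpoint skel (X : Type) (T : nat -> tree X) (n : nat) (w : seq nat)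
    (lf : tree X) : tree X :=
  match n with
  | 0 => lf
  | n'.+1 =>
      match w with
      | [::] => lf
      | a :: _ =>
          let m := foldr minn a w in
          let i := index m w in
          Node (skel T n' (take i w) lf) (skel T n' (drop i.+1 w) (T m))
      end
  end.

Section Psi.
Variables (X : Type) (t0 : tree X) (F' : forest X).
Local Notation k := (size F').

(* Trees of F' indexed from 0: T_c = nth c F' (label c here is c+1 in the
   paper; the shift preserves all minima/orderings). *)
Definition Tl (c : nat) : tree X := nth t0 F' c.

Definition orbit_min (s : {perm 'I_k}) (o : 'I_k) : bool :=
  [forall j, (j \in porbit s o) ==> (o <= j)%N].

Definition orbit_mins (s : {perm 'I_k}) : seq 'I_k :=
  [seq o <- enum 'I_k | orbit_min s o].

Definition orbit_tree (s : {perm 'I_k}) (o : 'I_k) : tree X :=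
  let m := #|porbit s o| in
  let tau := [seq val ((s ^+ j)%g o) | j <- iota 1 m.-1] in
  skel Tl (size tau) tau (Tl o).

Definition Psi (s : {perm 'I_k}) : forest X :=
  [seq orbit_tree s o | o <- orbit_mins s].

End Psi.

(* With g = T_1 ... T_k and y = T_{k+1}, the relation
   F * (g y) = (F * g) * y - F * (g * y), where
   g * y = sum_c T_1 ... (T_c \vee y) ... T_k, reduces F * F' to k + 1
   products with k factors. Every permutation of {1, ..., k+1} arises exactly
   once by inserting k+1 into a permutation s of {1, ..., k}, either as a new
   fixed point or right after some c in its cycle. A new fixed point adds an
   orbit, so keeps the sign, and appends T_{k+1} to Psi(s): these are the terms
   of (F * g) * y. Inserting after c keeps the number of orbits, so flips the
   sign; as k+1 is the largest label, its node in the skeleton has two leaves,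
   carrying T_c and T_{k+1}, so the result is Psi(s) with T_c replaced by
   T_c \vee T_{k+1}: these are the terms of - F * (g * y). *)

From Pilot Require Import Defs.
From Stdlib Require Import ClassicalEpsilon.
From HB Require Import structures.
From mathcomp Require Import all_boot all_order all_algebra all_fingroup.
Set Implicit Arguments.
Unset Strict Implicit.
Unset Printing Implicit Defensive.
Import GRing.Theory.

Local Notation orbit := fingraph.orbit.

Lemma decPP (P : Prop) : reflect P (Pilot.Defs.decP P).
Proof. by rewrite /Pilot.Defs.decP; case: excluded_middle_informative => h; constructor. Qed.

HB.instance Definition _ (X : Type) :=
  hasDecEq.Build (tree X) (fun t u => decPP (t = u)).

Section LinearCombinations.
Variables (R : fieldType) (X : Type).
Local Open Scope ring_scope.
Implicit Types (v w : lin R X) (G H : forest X) (phi : forest X -> R).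

Lemma coefE v G : coef v G = \sum_(p <- v) (if p.2 == G then p.1 else 0).
Proof. by apply: eq_bigr => p _; case: decPP => [->|/eqP/negbTE->]; rewrite ?eqxx. Qed.

Lemma coef_cat v w G : coef (v ++ w) G = coef v G + coef w G.
Proof. exact: big_cat. Qed.

Lemma coef_scale c v G : coef (scale c v) G = c * coef v G.
Proof.
by rewrite /coef big_map mulr_sumr; apply: eq_bigr => p _ /=; case: ifP; rewrite ?mulr0.
Qed.

Lemma coef_flatten_scale (I : Type) (r : seq I) (c : I -> R) (u : I -> lin R X) G :
  coef (flatten [seq scale (c i) (u i) | i <- r]) G = \sum_(i <- r) c i * coef (u i) G.
Proof.
elim: r => [|i r IH]; first by rewrite big_nil /coef big_nil.
by rewrite /= coef_cat coef_scale big_cons IH.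
Qed.

Definition lin_apply phi v : R := \sum_(p <- v) p.1 * phi p.2.

Lemma lin_applyE phi v (s : seq (forest X)) : uniq s -> {subset map snd v <= s} ->
  lin_apply phi v = \sum_(H <- s) coef v H * phi H.
Proof.
move=> s_uniq v_s; under [RHS]eq_bigr => H _ do rewrite coefE mulr_suml.
rewrite exchange_big /=; apply: eq_big_seq => p pv.
rewrite (bigD1_seq p.2) ?v_s ?(map_f snd) //= eqxx big1 ?addr0 // => H /negbTE.
by rewrite eq_sym => ->; rewrite mul0r.
Qed.

Lemma lin_apply_eq phi v w : lin_eq v w -> lin_apply phi v = lin_apply phi w.
Proof.
move=> vw; set s := undup (map snd v ++ map snd w).
have sub_v : {subset map snd v <= s} by move=> H Hv; rewrite mem_undup mem_cat Hv.
have sub_w : {subset map snd w <= s} by move=> H Hw; rewrite mem_undup mem_cat Hw orbT.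
rewrite (lin_applyE _ (undup_uniq _) sub_v) (lin_applyE _ (undup_uniq _) sub_w).
by apply: eq_bigr => H _; rewrite vw.
Qed.

Lemma coef_graft_lin v S G :
  coef (graft_lin v S) G = lin_apply (fun H => coef (graft1 R H S) G) v.
Proof.
rewrite /graft_lin; elim: v => [|p v IH]; first by rewrite /coef /lin_apply !big_nil.
by rewrite /= coef_cat coef_scale IH /lin_apply big_cons.
Qed.

Lemma graft_lin_eq v w S : lin_eq v w -> lin_eq (graft_lin v S) (graft_lin w S).
Proof. by move=> vw G; rewrite !coef_graft_lin; apply: lin_apply_eq. Qed.

Lemma coef_graft_lin_flatten (I : Type) (r : seq I) (c : I -> R) (u : I -> lin R X) S G :
  coef (graft_lin (flatten [seq scale (c i) (u i) | i <- r]) S) G =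
  \sum_(i <- r) c i * coef (graft_lin (u i) S) G.
Proof.
elim: r => [|i r IH]; first by rewrite /coef !big_nil.
rewrite big_cons -IH /graft_lin /= map_cat flatten_cat coef_cat; congr (_ + _).
rewrite !coef_graft_lin /lin_apply /scale big_map mulr_sumr.
by apply: eq_bigr => p _; rewrite mulrA.
Qed.

Lemma graft_forest_rcons (F P : forest X) (y : tree X) :
  graft_forest R F (rcons P y) = graft_lin (graft_forest R F P) y.
Proof. by rewrite /graft_forest -cats1 foldl_cat. Qed.

End LinearCombinations.

Lemma exists_pivot (T : eqType) (x : T) (s : seq T) :
  x \in s -> exists s1 s2, s = s1 ++ x :: s2 /\ x \notin s1.
Proof.
move=> xs; exists (take (index x s) s), (drop (index x s).+1 s).
by rewrite -drop_index // cat_take_drop in_take // ltnn.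
Qed.

Lemma take_size_addn_cat (T : Type) n (s1 s2 : seq T) :
  take (size s1 + n) (s1 ++ s2) = s1 ++ take n s2.
Proof. by elim: s1 => //= a s1 ->. Qed.

Lemma drop_size_addn_cat (T : Type) n (s1 s2 : seq T) :
  drop (size s1 + n) (s1 ++ s2) = drop n s2.
Proof. by elim: s1. Qed.

Lemma drop_size_pivot (T : Type) (x : T) (s1 s2 : seq T) :
  drop (size s1).+1 (s1 ++ x :: s2) = s2.
Proof. by elim: s1 => [|a s1 IH] /=; rewrite ?drop0. Qed.

Lemma mkseq_cons (A : Type) (f : nat -> A) n : mkseq f n.+1 = f 0%N :: mkseq (f \o succn) n.
Proof. by rewrite /mkseq /= -[iota 1 n]/(iota (1 + 0) n) iotaDl -map_comp. Qed.

Lemma dropl_cat (T : Type) n (s1 s2 : seq T) :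
  n <= size s1 -> drop n (s1 ++ s2) = drop n s1 ++ s2.
Proof.
move=> le_n; rewrite drop_cat ltn_neqAle le_n andbT.
by case: eqP => [->|//]; rewrite subnn drop0 drop_size.
Qed.

Lemma size_pivot_leq (T : Type) (x : T) (s1 s2 : seq T) n :
  size (s1 ++ x :: s2) <= n.+1 -> size s1 <= n /\ size s2 <= n.
Proof.
by rewrite size_cat addnS ltnS => le_n; split; apply: leq_trans le_n; rewrite ?leq_addr ?leq_addl.
Qed.

Lemma foldr_minn_mem a w : foldr minn a w \in a :: w.
Proof.
elim: w => [|b w IH] /=; first exact: mem_head.
rewrite /minn; case: ifP => _; first by rewrite !inE eqxx orbT.
by move: IH; rewrite !inE => /orP[]->; rewrite ?orbT.
Qed.

Lemma foldr_minn_leq a w j : j \in a :: w -> foldr minn a w <= j.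
Proof.
elim: w j => [|b w IH] j /=; first by rewrite inE => /eqP->.
rewrite !inE geq_min => /or3P[/eqP->|/eqP->|jw].
- by rewrite IH ?mem_head ?orbT.
- by rewrite leqnn.
by rewrite IH ?inE ?jw ?orbT.
Qed.

Lemma foldr_minn_cons_mem a w : foldr minn a (a :: w) \in a :: w.
Proof. by rewrite /= /minn; case: ifP => _; rewrite ?mem_head ?foldr_minn_mem. Qed.

Lemma foldr_minn_cons a w m :
  m \in a :: w -> {in a :: w, forall j, m <= j} -> foldr minn a (a :: w) = m.
Proof.
move=> mw m_min; apply/eqP; rewrite eqn_leq foldr_minn_leq /=; last by rewrite inE mw orbT.
by rewrite m_min ?foldr_minn_cons_mem.
Qed.

Lemma exists_seq_min (w : seq nat) :
  w != [::] -> exists2 m, m \in w & {in w, forall j, m <= j}.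
Proof.
case: w => // a w _; exists (foldr minn a (a :: w)); first exact: foldr_minn_cons_mem.
by move=> j jw; apply: foldr_minn_leq; rewrite inE jw orbT.
Qed.

(** * Labelled skeletons *)

Section Skeleton.
Variables (X : Type) (d : tree X).

(* [skeleton n w ls] is the labelled skeleton of [w] whose leaves carry, from
   left to right, the trees of [ls]. The leaf following the node labelled [c]
   is the leftmost leaf of its right subtree, so [skel T n w lf] is
   [skeleton n w (lf :: map T w)] (lemma [skel_skeleton]). *)
Fixpoint skeleton (n : nat) (w : seq nat) (ls : seq (tree X)) : tree X :=
  match n, w with
  | n'.+1, a :: _ =>
      let i := index (foldr minn a w) w in
      Node (skeleton n' (take i w) (take i.+1 ls))
           (skeleton n' (drop i.+1 w) (drop i.+1 ls))
  | _, _ => head d ls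
  end.

Lemma skeleton_nil n ls : skeleton n [::] ls = head d ls.
Proof. by case: n. Qed.

Lemma skeleton_cons n a w ls (i := index (foldr minn a (a :: w)) (a :: w)) :
  skeleton n.+1 (a :: w) ls =
  Node (skeleton n (take i (a :: w)) (take i.+1 ls))
       (skeleton n (drop i.+1 (a :: w)) (drop i.+1 ls)).
Proof. by []. Qed.

Lemma skeleton_fuel n1 n2 w ls :
  size w <= n1 -> size w <= n2 -> skeleton n1 w ls = skeleton n2 w ls.
Proof.
elim: n1 n2 w ls => [|n1 IH] [|n2] [|a w] ls // w_n1 w_n2.
rewrite !skeleton_cons; set i := index _ (a :: w).
have iw : i <= size w by rewrite -ltnS index_mem foldr_minn_cons_mem.
have take_w : size (take i (a :: w)) <= size w by rewrite size_take ltnS iw.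
have drop_w : size (drop i.+1 (a :: w)) <= size w by rewrite size_drop subSS leq_subr.
by congr Node; apply: IH; apply: leq_trans; eassumption.
Qed.

Lemma skeleton_pivot n w1 m w2 ls :
  m \notin w1 -> {in w1 ++ m :: w2, forall j, m <= j} ->
  skeleton n.+1 (w1 ++ m :: w2) ls =
  Node (skeleton n w1 (take (size w1).+1 ls)) (skeleton n w2 (drop (size w1).+1 ls)).
Proof.
move=> mNw1 m_min; case E: (w1 ++ m :: w2) => [|a w].
  by move/(congr1 size): E; rewrite size_cat addnS.
rewrite skeleton_cons (foldr_minn_cons (m := m)) -E ?mem_cat ?mem_head ?orbT //.
by rewrite index_pivot // take_size_cat // drop_size_pivot.
Qed.

Lemma skel_cons (T : nat -> tree X) n a w lf (m := foldr minn a (a :: w)) :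
  skel T n.+1 (a :: w) lf =
  Node (skel T n (take (index m (a :: w)) (a :: w)) lf)
       (skel T n (drop (index m (a :: w)).+1 (a :: w)) (T m)).
Proof. by []. Qed.

Lemma skel_skeleton (T : nat -> tree X) n w lf :
  skel T n w lf = skeleton n w (lf :: map T w).
Proof.
elim: n w lf => [|n IH] [|a w] lf //.
rewrite skel_cons skeleton_cons !IH map_take; congr (Node _ (skeleton _ _ _)).
have mw := foldr_minn_cons_mem a w; set m := foldr _ _ _ in mw *; set i := index m _.
by rewrite /= -[T a :: _]/(map T (a :: w)) -map_drop drop_index // nth_index.
Qed.

Lemma skeleton_insert_max_nil k n u v l1 x y l2 :
  size l1 = size u -> u ++ v = [::] ->
  skeleton n.+1 (u ++ k :: v) (l1 ++ x :: y :: l2) =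
  skeleton n (u ++ v) (l1 ++ Node x y :: l2).
Proof.
case: u => //; case: v => //; case: l1 => // _ _.
by rewrite (@skeleton_pivot _ [::]) ?skeleton_nil //= => j; rewrite inE => /eqP->.
Qed.

(* A letter larger than all others labels a node both of whose subtrees are
   leaves, hence inserting it merges the two corresponding leaves. *)
Lemma skeleton_insert_max k n u v l1 x y l2 :
  size l1 = size u -> {in u ++ v, forall j, j < k} -> size (u ++ v) <= n ->
  skeleton n.+1 (u ++ k :: v) (l1 ++ x :: y :: l2) =
  skeleton n (u ++ v) (l1 ++ Node x y :: l2).
Proof.
elim: n u v l1 l2 => [|n IH] u v l1 l2 l1u uv_k uv_n;
  have [uv0|/exists_seq_min[m m_uv m_min]] := eqVneq (u ++ v) [::];
  try exact: skeleton_insert_max_nil.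
  by move: uv_n; rewrite leqn0 size_eq0 => /eqP uv0; rewrite uv0 in m_uv.
have m_k : m < k by exact: uv_k.
have m_min_k : {in u ++ k :: v, forall j, m <= j}.
  move=> j; rewrite !mem_cat inE => /or3P[ju|/eqP->|jv].
  - by rewrite m_min // mem_cat ju.
  - exact: ltnW.
  - by rewrite m_min // mem_cat jv orbT.
have [/exists_pivot[u1 [u2 [def_u mNu1]]] | mNu] := boolP (m \in u).
  subst u; rewrite -!catA !cat_cons in m_min m_min_k uv_k uv_n *.
  have [u1_n u2v_n] := size_pivot_leq uv_n.
  have lt_u1 : (size u1).+1 <= size l1 by rewrite l1u size_cat addnS ltnS leq_addr.
  rewrite !(@skeleton_pivot _ u1 m) // !takel_cat // !dropl_cat // IH //; last first.
  - by move=> j ju2v; apply: uv_k; rewrite mem_cat inE ju2v !orbT.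
  - by rewrite size_drop l1u size_cat addnS subSS addKn.
  by congr Node; apply: skeleton_fuel; rewrite ?u1_n ?(leqW u1_n).
have [v1 [v2 [def_v mNv1]]] : exists v1 v2, v = v1 ++ m :: v2 /\ m \notin v1.
  by apply: exists_pivot; move: m_uv; rewrite mem_cat (negPf mNu).
subst v; rewrite -?cat_cons !catA in m_min m_min_k uv_k uv_n *.
have [uv1_n v2_n] := size_pivot_leq uv_n.
have mNuv1 : m \notin u ++ v1 by rewrite mem_cat negb_or mNu.
have mNukv1 : m \notin u ++ k :: v1.
  by rewrite mem_cat in_cons (ltn_eqF m_k) /= negb_or mNu.
rewrite (@skeleton_pivot _ (u ++ k :: v1) m) // (@skeleton_pivot _ (u ++ v1) m) //.
have -> : (size (u ++ k :: v1)).+1 = size l1 + (size v1).+2 by rewrite size_cat l1u addnS.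
have -> : (size (u ++ v1)).+1 = size l1 + (size v1).+1 by rewrite size_cat l1u addnS.
rewrite !take_size_addn_cat !drop_size_addn_cat.
rewrite [take _ (x :: _)]/= [take _ (Node x y :: _)]/= [drop _ (x :: _)]/=.
rewrite [drop _ (Node x y :: _)]/= IH //; last first.
  by move=> j juv1; apply: uv_k; rewrite mem_cat juv1.
by congr Node; apply: skeleton_fuel; rewrite ?v2_n ?(leqW v2_n).
Qed.

End Skeleton.

(** * Orbits of permutations *)

Section PermOrbit.
Variable T : finType.
Implicit Types (s : {perm T}) (x : T) (p : seq T).

Lemma orbit_head s x : exists l, orbit s x = x :: l.
Proof. by rewrite /orbit -orderSpred /=; eexists. Qed.

Lemma traject_expg s x i m :
  traject s ((s ^+ i)%g x) m = [seq (s ^+ j)%g x | j <- iota i m].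
Proof. by elim: m i => //= m IH i; rewrite -permM -expgSr IH. Qed.

Lemma orbit_porbitE s x : orbit s x = traject s x #|porbit s x|.
Proof.
have : #|porbit s x| != 0 := card_porbit_neq0 s x.
have x_cycle := iter_porbit s x; have x_uniq := uniq_traject_porbit s x.
case: #|porbit s x| x_cycle x_uniq => [//|n] x_cycle x_uniq _.
have xn_cycle : fcycle s (x :: traject s (s x) n).
  by rewrite /= -[X in rcons _ X]x_cycle iterSr -trajectSr fpath_traject.
by rewrite -(undup_cycle_cons xn_cycle) undup_id -?trajectS.
Qed.

Lemma porbit_orbit s x : porbit s x =i orbit s x.
Proof. by move=> y; rewrite orbit_porbitE porbit_traject. Qed.

Lemma orbit_fcycle s x p : uniq (x :: p) -> fcycle s (x :: p) -> orbit s x = x :: p.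
Proof. by move=> xp_uniq xp_cycle; rewrite -(undup_cycle_cons xp_cycle) undup_id. Qed.

End PermOrbit.

Lemma orbit_morph (T T' : finType) (s : {perm T}) (t : {perm T'}) (h : T -> T') x :
  injective h -> {in orbit s x, forall y, t (h y) = h (s y)} ->
  orbit t (h x) = map h (orbit s x).
Proof.
move=> h_inj h_morph; have [l def_x] := orbit_head s x.
have x_cycle := cycle_orbit (@perm_inj _ s) x; have x_uniq := orbit_uniq s x.
rewrite def_x in h_morph x_cycle x_uniq *; rewrite (@orbit_fcycle _ _ _ (map h l)) //.
  by rewrite -map_cons map_inj_uniq.
rewrite -map_cons cycle_map (eq_in_cycle (P := mem (x :: l)) (e' := frel s)) ?all_predT //.
  by move=> y z y_in _ /=; rewrite h_morph // (inj_eq h_inj).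
by apply/allP.
Qed.

(** * Inserting a largest point into a permutation *)

Section PermInsert.
Variable k : nat.
Local Notation lft := (@lift k.+1 ord_max).
Local Notation max := (@ord_max k).
Implicit Types (s : {perm 'I_k}) (x o : 'I_k).

Definition perm_ext s : {perm 'I_k.+1} := lift_perm ord_max ord_max s.

(* Composition is left to right, so [perm_ins s c] maps [c] to [ord_max] and
   [ord_max] to the image of [c]: the new point is inserted right after [c]
   in its cycle (as a fixed point when [c = ord_max]). *)
Definition perm_ins s (c : 'I_k.+1) : {perm 'I_k.+1} := tperm c ord_max * perm_ext s.

Lemma lift_max_neq x : (lft x == max) = false.
Proof. by apply/negbTE; rewrite eq_sym neq_lift. Qed.

Lemma leq_lift_max x y : (lft x <= lft y) = (x <= y).
Proof. by rewrite !lift_max. Qed.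

Lemma enum_ord_lift_max : enum 'I_k.+1 = rcons (map lft (enum 'I_k)) max.
Proof.
by rewrite enum_ordSr; congr rcons; apply: eq_map => i; apply: ord_inj; rewrite lift_max.
Qed.

Lemma map_val_lift (r : seq 'I_k) : map val (map lft r) = map val r.
Proof. by rewrite -map_comp; apply: eq_map => x; exact: lift_max. Qed.

Lemma max_notin_lift (r : seq 'I_k) : max \notin map lft r.
Proof. by apply/mapP => -[x _ /eqP]; rewrite eq_sym lift_max_neq. Qed.

Lemma perm_ext_lift s x : perm_ext s (lft x) = lft (s x).
Proof. exact: lift_perm_lift. Qed.

Lemma perm_ext_max s : perm_ext s max = max.
Proof. exact: lift_perm_id. Qed.

Lemma perm_ins_lift s c x : perm_ins s c (lft x) = if lft x == c then max else lft (s x).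
Proof.
rewrite permM; case: tpermP => [->|/eqP|/eqP/negbTE-> _].
- by rewrite eqxx perm_ext_max.
- by rewrite lift_max_neq.
- exact: perm_ext_lift.
Qed.

Lemma perm_ins_point s c : perm_ins s c c = max.
Proof. by rewrite permM tpermL perm_ext_max. Qed.

Lemma perm_ins_max s c : perm_ins s c max = perm_ext s c.
Proof. by rewrite permM tpermR. Qed.

Lemma perm_ins_fixed s : perm_ins s max = perm_ext s.
Proof. by rewrite /perm_ins tperm1 mul1g. Qed.

Lemma perm_ins_inj : injective (fun sc : {perm 'I_k} * 'I_k.+1 => perm_ins sc.1 sc.2).
Proof.
move=> [s1 c1] [s2 c2] /= eq_ins.
have ec : c1 = c2 by apply: (@perm_inj _ (perm_ins s1 c1)); rewrite {2}eq_ins !perm_ins_point.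
move: eq_ins; rewrite -ec => /mulgI eq_ext; congr pair.
by apply/permP => x; apply: (@lift_inj _ ord_max); rewrite -!perm_ext_lift eq_ext.
Qed.

Lemma odd_perm_ext s : odd_perm (perm_ext s) = odd_perm s.
Proof. by rewrite odd_lift_perm addbb. Qed.

Lemma odd_perm_ins s c : odd_perm (perm_ins s c) = (c != max) (+) odd_perm s.
Proof. by rewrite odd_mul_tperm odd_perm_ext. Qed.

Lemma orbit_ext_lift s o : orbit (perm_ext s) (lft o) = map lft (orbit s o).
Proof. by apply: orbit_morph; [exact: lift_inj | move=> x _; exact: perm_ext_lift]. Qed.

Lemma orbit_ext_max s : orbit (perm_ext s) max = [:: max].
Proof. by rewrite (@orbit_fcycle _ _ _ [::]) //= perm_ext_max eqxx. Qed.

Lemma orbit_ins_out s c o : c \notin orbit s o ->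
  orbit (perm_ins s (lft c)) (lft o) = map lft (orbit s o).
Proof.
move=> cNo; apply: orbit_morph => [|x xo]; first exact: lift_inj.
by rewrite perm_ins_lift (inj_eq lift_inj); case: eqP xo cNo => // ->->.
Qed.

Lemma path_ins_lift s c x p : c \notin belast x p ->
  path (frel (perm_ins s (lft c))) (lft x) (map lft p) = path (frel s) x p.
Proof.
elim: p x => [|y p IH] x //=; rewrite inE negb_or => /andP[cx cNp].
by rewrite perm_ins_lift (inj_eq lift_inj) (eq_sym x c) (negPf cx) IH // (inj_eq lift_inj).
Qed.

Lemma orbit_ins_in s c o B v : orbit s o = B ++ c :: v ->
  orbit (perm_ins s (lft c)) (lft o) = map lft B ++ lft c :: max :: map lft v.
Proof.
move=> def_o; set p := _ ++ _.
have /= /andP[cNvB vB_uniq] : uniq (c :: v ++ B) by rewrite -cat_cons uniq_catC -def_o orbit_uniq.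
have cvB_cycle : fcycle s (c :: v ++ B).
  by rewrite -cat_cons cycle_catC -def_o (cycle_orbit (@perm_inj _ s)).
have p_uniq : uniq p.
  rewrite /p uniq_catC /= -map_cat in_cons lift_max_neq (mem_map lift_inj) cNvB.
  by rewrite max_notin_lift map_inj_uniq //; exact: lift_inj.
have p_cycle : fcycle (perm_ins s (lft c)) p.
  rewrite /p cycle_catC /= -map_cat perm_ins_point eqxx /=.
  move: cvB_cycle cNvB => /=; case: (v ++ B) => [|r0 r] /=.
    by rewrite perm_ins_max perm_ext_lift (inj_eq lift_inj).
  rewrite perm_ins_max perm_ext_lift (inj_eq lift_inj) => /andP[-> r_path] cNr.
  have -> : rcons (map lft r) (lft c) = map lft (rcons r c) by rewrite map_rcons.
  by rewrite path_ins_lift ?belast_rcons.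
have [l def_p] : exists l, p = lft o :: l.
  have [l' def_o'] := orbit_head s o; move: def_o'; rewrite def_o /p.
  by case: (B) => [|b B'] [-> _]; eexists.
by rewrite def_p (@orbit_fcycle _ _ _ l) -?def_p.
Qed.

End PermInsert.

(** * The forests Psi *)

Section Psi.
Variables (X : Type) (d : tree X).
Implicit Types (T : nat -> tree X) (w : seq nat).

Definition cycle_min n (s : {perm 'I_n}) (o : 'I_n) : bool :=
  all (fun j : 'I_n => o <= j) (orbit s o).

Definition cycle_mins n (s : {perm 'I_n}) : seq 'I_n :=
  [seq o <- enum 'I_n | cycle_min s o].

Definition cycle_tree T w : tree X := skeleton d (size w).-1 (behead w) (map T w).

(* [psi d T s] is [Psi] for an arbitrary assignment [T] of trees to labels
   (lemma [Psi_psi]); the assignment is what changes along the induction.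
   The default leaf [d] is never reached. *)
Definition psi n T (s : {perm 'I_n}) : forest X :=
  [seq cycle_tree T (map val (orbit s o)) | o <- cycle_mins s].

Lemma Psi_psi (t0 : tree X) (F' : forest X) (s : {perm 'I_(size F')}) :
  Psi t0 s = psi (Tl t0 F') s.
Proof.
rewrite /Psi /psi /orbit_mins /cycle_mins (eq_filter (a2 := cycle_min s)) => [|o].
  apply: eq_map => o; rewrite /orbit_tree (skel_skeleton d) orbit_porbitE.
  have := card_porbit_neq0 s o; case: #|porbit s o| => // m _.
  rewrite trajectS; have -> : traject s (s o) m = [seq (s ^+ j)%g o | j <- iota 1 m].
    by rewrite -traject_expg expg1.
  by rewrite /cycle_tree /= -!map_comp !size_map.
rewrite /orbit_min /cycle_min; apply/forallP/allP => [o_min j | o_min j].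
  by rewrite -porbit_orbit => /(implyP (o_min j)).
by apply/implyP; rewrite porbit_orbit => /o_min.
Qed.

Lemma cycle_tree_insert T a b c kk :
  c \notin a ++ b -> {in a ++ c :: b, forall j, j < kk} ->
  cycle_tree T (a ++ c :: kk :: b) = cycle_tree [eta T with c |-> Node (T c) (T kk)] (a ++ c :: b).
Proof.
move=> cNab ab_kk; rewrite /cycle_tree.
have -> : map [eta T with c |-> Node (T c) (T kk)] (a ++ c :: b) =
          map T a ++ Node (T c) (T kk) :: map T b.
  rewrite map_cat /= eqxx; congr (_ ++ _ :: _); apply/eq_in_map => x x_in /=;
  by case: eqP => // xc; move: cNab; rewrite mem_cat -xc x_in ?orbT.
have b_kk : {in b, forall j, j < kk} by move=> j jb; rewrite ab_kk // mem_cat inE jb !orbT.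
case: a cNab ab_kk => [|a0 a] cNab ab_kk /=.
  exact: (@skeleton_insert_max _ d kk (size b) [::] b [::]).
have cab_kk : {in rcons a c ++ b, forall j, j < kk}.
  by move=> j; rewrite cat_rcons => jacb; rewrite ab_kk //= inE jacb orbT.
have -> : size (a ++ [:: c, kk & b]) = (size (a ++ c :: b)).+1 by rewrite !size_cat addnS.
have -> : T a0 :: map T (a ++ [:: c, kk & b]) = (T a0 :: map T a) ++ [:: T c, T kk & map T b].
  by rewrite map_cat.
rewrite -cat_cons -[a ++ [:: c, kk & b]]cat_rcons -[a ++ c :: b]cat_rcons skeleton_insert_max //.
by rewrite /= size_rcons size_map.
Qed.

End Psi.

Section PsiInsert.
Variables (X : Type) (d : tree X) (k : nat).
Local Notation lft := (@lift k.+1 ord_max).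
Local Notation max := (@ord_max k).
Implicit Types (s : {perm 'I_k}) (o c : 'I_k) (T : nat -> tree X).

Lemma cycle_min_ext_lift s o : cycle_min (perm_ext s) (lft o) = cycle_min s o.
Proof. by rewrite /cycle_min orbit_ext_lift all_map; apply: eq_all => j; apply: leq_lift_max. Qed.

Lemma cycle_min_ext_max s : cycle_min (perm_ext s) max.
Proof. by rewrite /cycle_min orbit_ext_max /= leqnn. Qed.

Lemma cycle_min_ins_lift s c o : cycle_min (perm_ins s (lft c)) (lft o) = cycle_min s o.
Proof.
rewrite /cycle_min; have [/exists_pivot[B [v [def_o _]]] | cNo] := boolP (c \in orbit s o).
  have ins_o : orbit (perm_ins s (lft c)) (lft o) =i rcons (map lft (orbit s o)) max.
    move=> x; rewrite (orbit_ins_in def_o) def_o mem_rcons map_cat map_cons.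
    by rewrite !(in_cons, mem_cat); case: (x == max); rewrite ?orbT.
  rewrite (eq_all_r ins_o) all_rcons all_map leq_ord.
  by apply: eq_all => j; apply: leq_lift_max.
by rewrite orbit_ins_out // all_map; apply: eq_all => j; apply: leq_lift_max.
Qed.

Lemma cycle_min_ins_max s c : cycle_min (perm_ins s (lft c)) max = false.
Proof.
apply/negbTE/allPn; exists (lft c); last by rewrite -ltnNge lift_max ltn_ord.
rewrite -fconnect_orbit fconnect_sym; last exact: perm_inj.
by have := fconnect1 (perm_ins s (lft c)) (lft c); rewrite perm_ins_point.
Qed.

Lemma cycle_mins_ext s : cycle_mins (perm_ext s) = rcons (map lft (cycle_mins s)) max.
Proof.
rewrite /cycle_mins enum_ord_lift_max filter_rcons cycle_min_ext_max filter_map.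
by congr (rcons (map _ _) _); apply: eq_filter => o; exact: cycle_min_ext_lift.
Qed.

Lemma cycle_mins_ins s c : cycle_mins (perm_ins s (lft c)) = map lft (cycle_mins s).
Proof.
rewrite /cycle_mins enum_ord_lift_max filter_rcons cycle_min_ins_max filter_map.
by congr map; apply: eq_filter => o; exact: cycle_min_ins_lift.
Qed.

Lemma psi_ext T s : psi d T (perm_ext s) = rcons (psi d T s) (T k).
Proof.
rewrite /psi cycle_mins_ext map_rcons orbit_ext_max -map_comp; congr rcons.
by apply: eq_map => o /=; rewrite orbit_ext_lift map_val_lift.
Qed.

Lemma eq_in_cycle_tree T T' w : {in w, T =1 T'} -> cycle_tree d T w = cycle_tree d T' w.
Proof. by move=> eq_T; rewrite /cycle_tree; congr skeleton; apply/eq_in_map. Qed.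

Lemma psi_ins T s c :
  psi d T (perm_ins s (lft c)) = psi d [eta T with val c |-> Node (T c) (T k)] s.
Proof.
rewrite /psi cycle_mins_ins -map_comp; apply: eq_map => o /=.
have [/exists_pivot[B [v [def_o _]]] | cNo] := boolP (c \in orbit s o).
  have := orbit_uniq s o; rewrite def_o uniq_catC /= => /andP[cNvB _].
  rewrite (orbit_ins_in def_o) !map_cat !map_cons !map_val_lift lift_max.
  apply: cycle_tree_insert; last first.
    by move=> j; rewrite -map_cons -map_cat => /mapP[x _ ->]; exact: ltn_ord.
  by rewrite -map_cat (mem_map val_inj) mem_cat orbC -mem_cat.
rewrite orbit_ins_out // map_val_lift; apply: eq_in_cycle_tree => _ /mapP[x xo ->] /=.
by case: eqP => // /val_inj cx; rewrite -cx xo in cNo.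
Qed.

End PsiInsert.

(** * The expansion of F * T_1 ... T_k *)

Local Open Scope ring_scope.

Lemma signr_porbits (R : pzRingType) n (s : {perm 'I_n}) :
  (-1) ^+ (#|porbits s| + n) = (-1) ^+ s :> R.
Proof. by rewrite -signr_odd /odd_perm card_ord oddD addbC. Qed.

Lemma sum_perm_ins (V : nmodType) n (f : {perm 'I_n.+1} -> V) :
  \sum_(s : {perm 'I_n.+1}) f s =
  \sum_(s : {perm 'I_n}) (f (perm_ext s) + \sum_(c < n) f (perm_ins s (lift ord_max c))).
Proof.
have ins_bij : bijective (fun sc : {perm 'I_n} * 'I_n.+1 => perm_ins sc.1 sc.2).
  by apply: inj_card_bij; [exact: perm_ins_inj | rewrite card_prod !card_Sn card_ord factS mulnC].
rewrite (reindex _ (onW_bij _ ins_bij)) -(pair_bigA _ (fun s c => f (perm_ins s c))) /=.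
apply: eq_bigr => s _.
rewrite big_ord_recr /= perm_ins_fixed addrC; congr (_ + _); apply: eq_bigr => c _.
by congr (f (perm_ins s _)); apply: ord_inj; rewrite lift_max.
Qed.

Section StarExpansion.
Variables (R : fieldType) (X : Type) (d : tree X).
Implicit Types (F G : forest X) (T : nat -> tree X).

Lemma graft1_mkseq T n y :
  graft1 R (mkseq T n) y = [seq (1, mkseq [eta T with c |-> Node (T c) y] n) | c <- iota 0 n].
Proof.
elim: n T => [//|n IH] T.
rewrite mkseq_cons /= IH -[iota 1 n]/(iota (1 + 0) n) iotaDl -!map_comp mkseq_cons /=.
congr (_ :: _).
by apply: eq_map => c /=; rewrite mkseq_cons /=; congr (_, _ :: _); apply: eq_mkseq.
Qed.

Lemma coef_star_mkseqS T F n G :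
  coef (star R F (mkseq T n.+1)) G =
  coef (graft_lin (star R F (mkseq T n)) (T n)) G -
  \sum_(c < n) coef (star R F (mkseq [eta T with val c |-> Node (T c) (T n)] n)) G.
Proof.
rewrite /star size_mkseq mkseqS /= rev_rcons revK size_mkseq coef_cat coef_scale mulN1r.
rewrite graft1_mkseq coef_flatten_scale big_map -[n in iota 0 n]subn0 big_mkord.
by congr (_ - _); apply: eq_bigr => c _; rewrite mul1r size_mkseq.
Qed.

Theorem coef_star_mkseq n T F G :
  coef (star R F (mkseq T n)) G =
  \sum_(s : {perm 'I_n}) (-1) ^+ s * coef (graft_forest R F (psi d T s)) G.
Proof.
elim: n T F G => [|n IH] T F G.
  rewrite (big_pred1 1%g) => [|s]; last by apply/esym/eqP/permP => -[].
  by rewrite /psi /cycle_mins enum_ord0 odd_perm1 mul1r.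
have IH_lin : lin_eq (star R F (mkseq T n))
    (flatten [seq scale ((-1) ^+ s) (graft_forest R F (psi d T s))
             | s : {perm 'I_n} <- enum {perm 'I_n}]).
  by move=> H; rewrite IH coef_flatten_scale big_enum.
rewrite coef_star_mkseqS (graft_lin_eq _ IH_lin) coef_graft_lin_flatten big_enum /=.
rewrite sum_perm_ins big_split /= exchange_big -sumrN; congr (_ + _).
  apply: eq_bigr => s _.
  by rewrite odd_perm_ext psi_ext graft_forest_rcons.
apply: eq_bigr => c _; rewrite IH -sumrN; apply: eq_bigr => s _.
by rewrite psi_ins odd_perm_ins lift_max_neq signr_addb mulN1r mulNr.
Qed.

End StarExpansion.

Theorem corollary4p4 (R : fieldType) (X : Type) (F : forest X)
    (T1 : tree X) (Ts : seq (tree X)) :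
  let F' := T1 :: Ts in
  lin_eq (star R F F')
    (flatten [seq scale ((-1) ^+ (#|porbits s| + size F')%N)
                        (graft_forest R F (Psi T1 s))
             | s : {perm 'I_(size F')}]).
Proof.
move=> F' G; rewrite -[in star _ _ F'](mkseq_nth T1 F') (coef_star_mkseq _ T1).
rewrite coef_flatten_scale big_enum; apply: eq_big => // s _.
by rewrite signr_porbits (Psi_psi T1).
Qed.
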